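(* Let $X^+$ be a one-sided subshift with natural extension $\tilde X$, and let $c_kc_{k-1}\dots c_1c_0$ ($k\ge1$) be a block in $\mathcal L(\tilde X)$. Then $\mathrm{sig}(\mathrm{sig}(c_kc_{k-1}\dots c_1)c_0)=\mathrm{sig}(c_kc_{k-1}\dots c_1c_0)$.
   Context: $\mathcal A$ is a finite alphabet and $\sigma$ the shift, $(\sigma x)_i=x_{i+1}$. A one-sided subshift is a nonempty closed $\sigma$-invariant $X^+\subseteq\mathcal A^{\mathbb N}$; its natural extension is $\tilde X=\{x\in\mathcal A^{\mathbb Z}: x_px_{p+1}\dots\in X^+\ \forall p\in\mathbb Z\}$; $\mathcal L(\tilde X)$ is the set of finite blocks occurring in points of $\tilde X$. For $a_{-n}\dots a_0\in\mathcal L(\tilde X)$, $\mathrm{fol}(a_{-n}\dots a_0)=\{b_0b_1\dots\in X^+:\exists b\in\tilde X,\ b_{-n}\dots b_0=a_{-n}\dots a_0\}$. A block $a_{-n}\dots a_0\in\mathcal L(\tilde X)$ with $n\ge1$ is significant if $\mathrm{fol}(a_{-n}\dots a_0)\subsetneq\mathrm{fol}(a_{-n+1}\dots a_0)$; single symbols in $\mathcal L(\tilde X)$ are also counted as significant. The significant form $\mathrm{sig}(a_{-n}\dots a_0)$ is $a_{-k}\dots a_0$ with $k\le n$ maximal such that $a_{-k}\dots a_0$ is significant. *)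

From mathcomp Require Import all_boot all_order all_algebra.
From mathcomp Require Import boolp.
Set Implicit Arguments. Unset Strict Implicit. Unset Printing Implicit Defensive.
Import GRing.Theory Num.Theory.
Local Open Scope ring_scope.

Section Subshift.
Variable A : finType.

Definition shift (x : nat -> A) : nat -> A := fun n => x n.+1.

(* Closedness in the product (Cantor) topology of A^N, A discrete finite:
   a point all of whose finite prefixes are prefixes of points of X is in X. *)
Definition closed_seqset (X : (nat -> A) -> Prop) : Prop :=
  forall x : nat -> A,
    (forall n : nat, exists y, X y /\ forall i : nat, (i < n)%N -> y i = x i) ->
    X x.

Definition one_sided_subshift (X : (nat -> A) -> Prop) : Prop :=
  [/\ exists x, X x,
      closed_seqset X &
      forall x, X x -> X (shift x)].

Definition nat_ext (X : (nat -> A) -> Prop) (x : int -> A) : Prop :=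
  forall p : int, X (fun n : nat => x (p + n%:Z)).

Definition block_at (x : int -> A) (p : int) (len : nat) : seq A :=
  [seq x (p + i%:Z) | i <- iota 0 len].

Definition inL (X : (nat -> A) -> Prop) (w : seq A) : Prop :=
  exists x, nat_ext X x /\ exists p : int, block_at x p (size w) = w.

(* A block w = [:: a_{-n}; ...; a_0] (n = size w - 1): its follower set *)
Definition fol (X : (nat -> A) -> Prop) (w : seq A) (b : nat -> A) : Prop :=
  exists x, [/\ nat_ext X x,
               block_at x (- ((size w).-1)%:Z) (size w) = w &
               forall m : nat, b m = x m%:Z].

Definition strict_subset (P Q : (nat -> A) -> Prop) : Prop :=
  (forall b, P b -> Q b) /\ exists b, Q b /\ ~ P b.

(* Significant blocks; behead drops a_{-n}, giving a_{-n+1} ... a_0. *)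
Definition significant (X : (nat -> A) -> Prop) (w : seq A) : Prop :=
  inL X w /\
  (size w = 1%N \/ ((2 <= size w)%N /\ strict_subset (fol X w) (fol X (behead w)))).

(* The suffix a_{-k} ... a_0 of w (length k+1). *)
Definition suffix_len (w : seq A) (k : nat) : seq A := drop (size w - k.+1) w.

Definition sig (X : (nat -> A) -> Prop) (w : seq A) : seq A :=
  suffix_len w
    (\max_(k <- [seq k <- iota 0 (size w) | `[< significant X (suffix_len w k) >]]) k)%N.

End Subshift.

From mathcomp Require Import all_boot all_order all_algebra.
From mathcomp Require Import boolp zify.
Set Implicit Arguments. Unset Strict Implicit. Unset Printing Implicit Defensive.
Import GRing.Theory.
Local Open Scope ring_scope.

(* If [u a] is significant then so is [u]: shifting a two-sided point back by
   one symbol turns a follower of [behead u] outside [fol u] into a follower of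
   [behead u a] outside [fol (u a)].  Hence every significant suffix of [c c_0]
   of length at least 2 extends a significant suffix of [c], so it is a suffix
   of [sig(c) c_0]; the suffixes of [sig(c) c_0] are suffixes of [c c_0], so
   both blocks have the same longest significant suffix. *)

Section Blocks.
Variables (A : finType) (x : int -> A).

Lemma size_block_at p n : size (block_at x p n) = n.
Proof. by rewrite size_map size_iota. Qed.

Lemma block_atS p n : block_at x p n.+1 = rcons (block_at x p n) (x (p + n%:Z)).
Proof. by rewrite /block_at -addn1 iotaD map_cat /= cats1 add0n. Qed.

Lemma block_at_cons p n : block_at x p n.+1 = x p :: block_at x (p + 1) n.
Proof.
rewrite /block_at /= addr0; congr cons.
by rewrite (iotaDl 1 0) -map_comp; apply: eq_map => i /=; congr x; lia.
Qed.

Lemma block_at_translate d p n :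
  block_at (fun i => x (i + d)) p n = block_at x (p + d) n.
Proof. by apply: eq_map => i /=; congr x; lia. Qed.

End Blocks.

Section Followers.
Variables (A : finType) (X : (nat -> A) -> Prop).

Lemma nat_ext_translate (x : int -> A) d :
  nat_ext X x -> nat_ext X (fun i => x (i + d)).
Proof.
by move=> hx p; have := hx (p + d); congr X; apply: funext => n /=; congr x; lia.
Qed.

Lemma inL_rcons (u : seq A) a : inL X (rcons u a) -> inL X u.
Proof.
move=> [x [hx [p]]]; rewrite size_rcons block_atS => /rcons_inj[hp _].
by exists x; split => //; exists p.
Qed.

Lemma fol_behead (w : seq A) b :
  (2 <= size w)%N -> fol X w b -> fol X (behead w) b.
Proof.
case: w => [|a w] // hw [x [hx]]; rewrite [size _]/= block_at_cons => -[_ <-] hm.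
have {}hw : (0 < size w)%N := hw.
by exists x; split => //; rewrite size_block_at; congr block_at; lia.
Qed.

Lemma fol_rcons_behead (u : seq A) a :
  (2 <= size u)%N -> (forall b, fol X (behead u) b -> fol X u b) ->
  forall b, fol X (behead (rcons u a)) b -> fol X (rcons u a) b.
Proof.
case: u => [|u0 u] //= hu fol_u b [x [hx]].
rewrite size_rcons /= block_atS => /rcons_inj[hu_x ha] hb.
have [|z [hz hzu hzb]] := fol_u (fun m : nat => x (m%:Z - 1)).
  exists (fun i => x (i + -1)); split; first exact: nat_ext_translate.
    by rewrite block_at_translate -hu_x size_block_at; congr block_at; lia.
  by [].
exists (fun i => z (i + 1)); split; first exact: nat_ext_translate.
- rewrite /= size_rcons block_at_translate block_atS -rcons_cons; congr rcons.
    by rewrite -hzu /=; congr block_at; lia.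
  rewrite -ha (_ : _ + _ + _ = Posz 1); last by lia.
  by rewrite -hzb; congr x; lia.
- move=> m; rewrite hb (_ : _ + 1 = Posz m.+1); last by lia.
  by rewrite -hzb; congr x; lia.
Qed.

Lemma significant_rcons (u : seq A) a :
  (1 <= size u)%N -> significant X (rcons u a) -> significant X u.
Proof.
move=> hu [hL hs]; split; first exact: inL_rcons hL.
have [/eqP|hu1] := boolP (size u == 1%N); first by left.
have hu2 : (2 <= size u)%N by lia.
right; split=> //; split; first by move=> b; apply: fol_behead.
case: hs => [|[_ [_ [b [hb hnb]]]]]; first by rewrite size_rcons; lia.
apply: contrapT => hn; apply: hnb; apply: (fol_rcons_behead hu2 _ hb) => b' hb'.
by apply: contrapT => hnb'; apply: hn; exists b'.
Qed.

End Followers.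

Section SignificantForm.
Variables (A : finType) (X : (nat -> A) -> Prop).

Definition sig_index (w : seq A) : nat :=
  (\max_(k <- iota 0 (size w) | `[< significant X (suffix_len w k) >]) k)%N.

Lemma sigE (w : seq A) : sig X w = suffix_len w (sig_index w).
Proof. by rewrite /sig big_filter. Qed.

Lemma size_suffix_len (w : seq A) k : (k < size w)%N -> size (suffix_len w k) = k.+1.
Proof. by move=> hk; rewrite size_drop; lia. Qed.

Lemma suffix_len_suffix_len (w : seq A) k i :
  (i <= k)%N -> (k < size w)%N -> suffix_len (suffix_len w k) i = suffix_len w i.
Proof.
by move=> hi hk; rewrite /suffix_len drop_drop size_suffix_len //; congr drop; lia.
Qed.

Lemma suffix_len_rcons (u : seq A) a k :
  (k < size u)%N -> suffix_len (rcons u a) k.+1 = rcons (suffix_len u k) a.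
Proof.
move=> hk; rewrite /suffix_len size_rcons subSS drop_rcons //; lia.
Qed.

Lemma sig_index_lt (w : seq A) : (0 < size w)%N -> (sig_index w < size w)%N.
Proof.
move=> hw; suff : (sig_index w <= (size w).-1)%N by lia.
by apply/bigmax_leqP_seq => i; rewrite mem_iota => /andP[_ hi] _; lia.
Qed.

Lemma sig_index_rcons (u : seq A) a :
  (0 < size u)%N -> (sig_index (rcons u a) <= (sig_index u).+1)%N.
Proof.
move=> hu; apply/bigmax_leqP_seq => -[//|k].
rewrite mem_iota size_rcons => /andP[_ hk] /asboolP.
rewrite suffix_len_rcons // => /significant_rcons hsig.
rewrite ltnS; apply: leq_bigmax_seq; first by rewrite mem_iota; lia.
by apply/asboolP; apply: hsig; rewrite size_suffix_len.
Qed.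

(* Suffixes of [w] longer than [sig w] are not significant, so they do not
   contribute to the maximum. *)
Lemma sig_index_suffix_len (w : seq A) k :
  (sig_index w <= k)%N -> (k < size w)%N ->
  sig_index (suffix_len w k) = sig_index w.
Proof.
move=> hmk hk; rewrite /sig_index size_suffix_len //.
rewrite -(subnKC hk) iotaD big_cat add0n.
rewrite [X in _ = _ X]big1_seq ?maxn0; last first.
  move=> i /andP[/asboolP hi]; rewrite mem_iota => /andP[hki hiw].
  suff : (i <= sig_index w)%N by lia.
  by apply: leq_bigmax_seq => //; [rewrite mem_iota; lia | apply/asboolP].
rewrite [LHS]big_seq_cond [RHS]big_seq_cond; apply: eq_bigl => i.
case: (boolP (i \in _)) => //; rewrite mem_iota => hi.
by rewrite suffix_len_suffix_len //; lia.
Qed.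

End SignificantForm.

Theorem lemma5p1 (A : finType) (X : (nat -> A) -> Prop)
  (hX : one_sided_subshift X) (c : seq A) (c0 : A)
  (hk : (1 <= size c)%N) (hL : inL X (rcons c c0)) :
  sig X (rcons (sig X c) c0) = sig X (rcons c c0).
Proof.
set w := rcons c c0; set m := sig_index X c.
have hm : (m < size c)%N by apply: sig_index_lt.
have hw : size w = (size c).+1 by rewrite size_rcons.
have -> : rcons (sig X c) c0 = suffix_len w m.+1.
  by rewrite sigE suffix_len_rcons.
have hwm : (sig_index X w <= m.+1)%N by apply: sig_index_rcons.
rewrite !sigE sig_index_suffix_len ?hw //.
by rewrite suffix_len_suffix_len ?hw.
Qed.
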